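(* (Bicomplex Schwarz inequality.) Let $M$ be a free $\mathbb{T}$-module with a finite $\mathbb{T}$-basis, $V$ its associated complex vector space, and $(\cdot,\cdot)$ a bicomplex scalar product on $M$ which is hyperbolic positive and closed on $V$. Then for all $\widehat X,\widehat Y\in M$, $$|(\widehat X,\widehat Y)|\le\big|(\widehat X,\widehat X)^{1/2}(\widehat Y,\widehat Y)^{1/2}\big|\le\sqrt2\,\|\widehat X\|\,\|\widehat Y\|.$$
   Context: Bicomplex numbers: $\mathbb{T}=\{z_1+z_2\mathbf{i_2}: z_1,z_2\in\mathbb{C}(\mathbf{i_1})\}$, $\mathbb{C}(\mathbf{i_1})=\{x+y\mathbf{i_1}: x,y\in\mathbb{R}\}$, $\mathbf{i_1}^2=\mathbf{i_2}^2=-1$, $\mathbf{i_1}\mathbf{i_2}=\mathbf{i_2}\mathbf{i_1}=\mathbf{j}$, $\mathbf{j}^2=1$ (commutative). Hyperbolic numbers $\mathbb{D}=\{x+y\mathbf{j}:x,y\in\mathbb{R}\}$. Idempotents $\mathbf{e_1}=(1+\mathbf{j})/2$, $\mathbf{e_2}=(1-\mathbf{j})/2$. For $w=z_1+z_2\mathbf{i_2}\in\mathbb{T}$, $|w|=\sqrt{|z_1|^2+|z_2|^2}$ (Euclidean norm in $\mathbb{R}^4$). Conjugation: $(z_1+z_2\mathbf{i_2})^{\dagger_3}=\overline{z_1}-\overline{z_2}\mathbf{i_2}$. $\mathbb{D}^+=\{a\mathbf{e_1}+b\mathbf{e_2}: a,b\ge 0\}$, and $(a\mathbf{e_1}+b\mathbf{e_2})^{1/2}=\sqrt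 a\,\mathbf{e_1}+\sqrt b\,\mathbf{e_2}$. $M$ has $\mathbb{T}$-basis $\{\widehat m_1,\dots,\widehat m_n\}$, $V=\{\sum x_l\widehat m_l: x_l\in\mathbb{C}(\mathbf{i_1})\}$; for $\widehat X=\sum x_l\widehat m_l$ with $x_l=x_{1l}\mathbf{e_1}+x_{2l}\mathbf{e_2}$, $x_{kl}\in\mathbb{C}(\mathbf{i_1})$, put $\widehat X_{\mathbf{e_k}}=\sum_l x_{kl}\widehat m_l\in V$. A bicomplex scalar product is a map $(\cdot,\cdot):M\times M\to\mathbb{T}$ with: $(\widehat X,\widehat Y_1+\widehat Y_2)=(\widehat X,\widehat Y_1)+(\widehat X,\widehat Y_2)$; $(\widehat X,\alpha\widehat Y)=\alpha(\widehat X,\widehat Y)$ for $\alpha\in\mathbb{T}$; $(\widehat X,\widehat Y)=(\widehat Y,\widehat X)^{\dagger_3}$; $(\widehat X,\widehat X)=0\iff\widehat X=0$. Hyperbolic positive: $(\widehat X,\widehat X)\in\mathbb{D}^+$ for all $\widehat X$. Closed on $V$: $(\widehat X,\widehat Y)\in\mathbb{C}(\mathbf{i_1})$ for $\widehat X,\widehat Y\in V$. For $\widehat Z\in V$, $\|\widehat Z\|=(\widehat Z,\widehat Z)^{1/2}$; for $\widehat X\in M$, $\|\widehat X\|:=\big|(\widehat X,\widehat X)^{1/2}\big|=\big((\|\widehat X_{\mathbf{e_1}}\|^2+\|\widehat X_{\mathbf{e_2}}\|^2)/2\big)^{1/2}$. *)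

(* Bicomplex numbers over C(i1) := R[i], R a real closed field. *)
From HB Require Import structures.
From mathcomp Require Import all_boot all_order all_algebra.
From mathcomp Require Import complex.
Set Implicit Arguments. Unset Strict Implicit. Unset Printing Implicit Defensive.
Import Order.TTheory GRing.Theory Num.Theory.
Local Open Scope ring_scope.

Section Bicomplex.
Variable R : rcfType.
Local Notation C := (complex R).

(* w = z1 + z2 i2 is represented by the pair (z1, z2) *)
Definition bicomplex : Type := (C * C)%type.

Definition czero : C := Complex 0 0.
Definition cone : C := Complex 1 0.
Definition creal (x : R) : C := Complex x 0.
Definition cconj (z : C) : C := Complex (complex.Re z) (- complex.Im z).
Definition cnorm2 (z : C) : R := complex.Re z ^+ 2 + complex.Im z ^+ 2.

Definition bzero : bicomplex := (czero, czero).
Definition badd (w v : bicomplex) : bicomplex := (w.1 + v.1, w.2 + v.2).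
(* (z1 + z2 i2)(w1 + w2 i2) = (z1 w1 - z2 w2) + (z1 w2 + z2 w1) i2 *)
Definition bmul (w v : bicomplex) : bicomplex :=
  (w.1 * v.1 - w.2 * v.2, w.1 * v.2 + w.2 * v.1).
Definition breal (x : R) : bicomplex := (creal x, czero).
(* conjugation dagger_3 : (z1 + z2 i2)^{dagger_3} = conj z1 - conj z2 i2 *)
Definition bconj3 (w : bicomplex) : bicomplex := (cconj w.1, - cconj w.2).
Definition bnorm (w : bicomplex) : R := Num.sqrt (cnorm2 w.1 + cnorm2 w.2).

(* j = i1 i2, e1 = (1+j)/2, e2 = (1-j)/2 *)
Definition bj : bicomplex := (czero, Complex 0 1).
Definition be1 : bicomplex := (Complex (1/2) 0, Complex 0 (1/2)).
Definition be2 : bicomplex := (Complex (1/2) 0, Complex 0 (-(1/2))).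

Definition inDplus (w : bicomplex) : Prop :=
  exists a b : R, 0 <= a /\ 0 <= b /\
    w = badd (bmul (breal a) be1) (bmul (breal b) be2).

(* idempotent components: z1 + z2 i2 = (z1 - z2 i1) e1 + (z1 + z2 i1) e2 *)
Definition bcomp1 (w : bicomplex) : C := w.1 - Complex 0 1 * w.2.
Definition bcomp2 (w : bicomplex) : C := w.1 + Complex 0 1 * w.2.

(* hyperbolic square root: (a e1 + b e2)^{1/2} = sqrt a e1 + sqrt b e2
   (meaningful on D^+, where a = bcomp1 w, b = bcomp2 w are real) *)
Definition bsqrt (w : bicomplex) : bicomplex :=
  badd (bmul (breal (Num.sqrt (complex.Re (bcomp1 w)))) be1)
       (bmul (breal (Num.sqrt (complex.Re (bcomp2 w)))) be2).

Definition inCi1 (w : bicomplex) : Prop := w.2 = czero.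

(* M: free T-module with T-basis m_1..m_n, represented by coordinates *)
Definition bmod (n : nat) : Type := 'I_n -> bicomplex.
Definition mzero n : bmod n := fun _ => bzero.
Definition madd n (X Y : bmod n) : bmod n := fun l => badd (X l) (Y l).
Definition mscale n (a : bicomplex) (X : bmod n) : bmod n := fun l => bmul a (X l).
Definition inV n (X : bmod n) : Prop := forall l, inCi1 (X l).

Definition bicomplex_scalar_product n (ip : bmod n -> bmod n -> bicomplex) : Prop :=
  [/\ (forall X Y1 Y2, ip X (madd Y1 Y2) = badd (ip X Y1) (ip X Y2)),
      (forall X Y a, ip X (mscale a Y) = bmul a (ip X Y)),
      (forall X Y, ip X Y = bconj3 (ip Y X)) &
      (forall X, ip X X = bzero <-> X = @mzero n)].

Definition hyperbolic_positive n (ip : bmod n -> bmod n -> bicomplex) : Prop :=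
  forall X, inDplus (ip X X).

Definition closed_on_V n (ip : bmod n -> bmod n -> bicomplex) : Prop :=
  forall X Y, inV X -> inV Y -> inCi1 (ip X Y).

Definition mnorm n (ip : bmod n -> bmod n -> bicomplex) (X : bmod n) : R :=
  bnorm (bsqrt (ip X X)).

End Bicomplex.

From mathcomp Require Import all_boot all_order all_algebra.
From mathcomp Require Import complex ring lra.
Set Implicit Arguments. Unset Strict Implicit. Unset Printing Implicit Defensive.
Import Order.TTheory GRing.Theory Num.Theory.
Local Open Scope ring_scope.

(* Both idempotent projections w |-> w_1, w |-> w_2 of T onto C(i1) are ring
   morphisms turning dagger_3 into complex conjugation and sending D^+ to
   nonnegative reals.  Composed with the bicomplex scalar product, each gives a
   positive semidefinite hermitian form, so the classical Cauchy-Schwarz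
   inequality |(X,Y)_k|^2 <= (X,X)_k (Y,Y)_k holds for k = 1, 2.  Since
   |w|^2 = (|w_1|^2 + |w_2|^2) / 2, summing the two inequalities gives the
   first bound, and p1 q1 + p2 q2 <= (p1 + p2) (q1 + q2) gives the second. *)

Section IdempotentComponents.
Variable R : rcfType.
Local Notation C := (complex R).

Lemma le_mul_of_quadratic_ge0 (p q N : R) : 0 <= N -> 0 <= q ->
  (forall s, 0 <= p - 2 * s * N + s ^+ 2 * N * q) -> N <= p * q.
Proof.
move=> N_ge0 q_ge0 quad_ge0.
have [q0|q_neq0] := eqVneq q 0.
  subst q; rewrite mulr0 leNgt; apply/negP => N_gt0.
  have := quad_ge0 ((p + 1) / (2 * N)); rewrite mulr0 addr0.
  have -> : 2 * ((p + 1) / (2 * N)) * N = p + 1.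
    by field; rewrite ?pnatr_eq0 ?(gt_eqF N_gt0).
  lra.
have le_p : q^-1 * N <= p.
  have := quad_ge0 q^-1.
  have -> : q^-1 ^+ 2 * N * q = q^-1 * N by field.
  have -> : 2 * q^-1 * N = 2 * (q^-1 * N) by ring.
  lra.
by rewrite -[leLHS](mulVKf q_neq0) [p * q]mulrC ler_wpM2l.
Qed.

(* Testing the hermitian form against z = -s a^* reduces it to a real quadratic in s. *)
Lemma cnorm2_le_of_hermitian_ge0 (p q : R) (a : C) : 0 <= q ->
  (forall z : C, 0 <= complex.Re (Complex p 0 + z * a +
                                  z^*%C * (a^*%C + z * Complex q 0))) ->
  cnorm2 a <= p * q.
Proof.
case: a => ar ai q_ge0 herm_ge0; rewrite /cnorm2 /=.
apply: le_mul_of_quadratic_ge0 => //; first by nra.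
move=> s; move: (herm_ge0 (Complex (- s * ar) (s * ai))); simpc; rewrite /=.
by congr (_ <= _); ring.
Qed.

Lemma schwarz_sum_bounds (a1 a2 p1 p2 q1 q2 : R) :
    0 <= p1 -> 0 <= p2 -> 0 <= q1 -> 0 <= q2 ->
    a1 <= p1 * q1 -> a2 <= p2 * q2 ->
  Num.sqrt ((a1 + a2) / 2) <= Num.sqrt ((p1 * q1 + p2 * q2) / 2) /\
  Num.sqrt ((p1 * q1 + p2 * q2) / 2)
    <= Num.sqrt 2 * Num.sqrt ((p1 + p2) / 2) * Num.sqrt ((q1 + q2) / 2).
Proof.
move=> p1_ge0 p2_ge0 q1_ge0 q2_ge0 a1_le a2_le; split.
  by rewrite ler_sqrt; [lra | nra].
by rewrite -!sqrtrM ?ler_sqrt; [nra | nra | lra | lra].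
Qed.

Ltac complex_ring := apply/eqP; rewrite eq_complex /=; apply/andP; split; apply/eqP; ring.
Ltac bicomplex_cases := repeat match goal with
  | u : bicomplex R |- _ => case: u => [[? ?] [? ?]]
  | z : C |- _ => case: z => ? ?
  end.

Lemma bconj3D (u v : bicomplex R) : bconj3 (badd u v) = badd (bconj3 u) (bconj3 v).
Proof. bicomplex_cases; rewrite /bconj3 /badd /cconj /=; congr pair; complex_ring. Qed.

Lemma bconj3M (u v : bicomplex R) : bconj3 (bmul u v) = bmul (bconj3 u) (bconj3 v).
Proof. bicomplex_cases; rewrite /bconj3 /bmul /cconj /=; congr pair; simpc; complex_ring. Qed.

Definition idempotent_component (c : bicomplex R -> C) : Prop :=
  [/\ (forall u v, c (badd u v) = c u + c v),
      (forall u v, c (bmul u v) = c u * c v),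
      (forall u, c (bconj3 u) = (c u)^*%C),
      (forall z, c (z, czero R) = z) &
      (forall w, inDplus w -> complex.Im (c w) = 0 /\ 0 <= complex.Re (c w))].

Lemma bcomp1_idempotent_component : idempotent_component (@bcomp1 R).
Proof.
split=> [u v|u v|u|z|w [a [b [a_ge0 [b_ge0 ->]]]]]; bicomplex_cases;
  rewrite /bcomp1 /badd /bmul /bconj3 /cconj /breal /be1 /be2 /creal /czero /=;
  simpc; try complex_ring.
by split; [|lra].
Qed.

Lemma bcomp2_idempotent_component : idempotent_component (@bcomp2 R).
Proof.
split=> [u v|u v|u|z|w [a [b [a_ge0 [b_ge0 ->]]]]]; bicomplex_cases;
  rewrite /bcomp2 /badd /bmul /bconj3 /cconj /breal /be1 /be2 /creal /czero /=;
  simpc; try complex_ring.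
by split; [|lra].
Qed.

Lemma cnorm2M (z w : C) : cnorm2 (z * w) = cnorm2 z * cnorm2 w.
Proof. case: z => a b; case: w => c d; rewrite /cnorm2; simpc; rewrite /=; ring. Qed.

Lemma cnorm2_sqrt (x : R) : 0 <= x -> cnorm2 (Complex (Num.sqrt x) 0) = x.
Proof. by move=> x_ge0; rewrite /cnorm2 /= sqr_sqrtr // expr0n addr0. Qed.

Lemma bnorm_idempotent (w : bicomplex R) :
  bnorm w = Num.sqrt ((cnorm2 (bcomp1 w) + cnorm2 (bcomp2 w)) / 2).
Proof.
case: w => [[a b] [c d]]; rewrite /bnorm /cnorm2 /bcomp1 /bcomp2 /=; simpc.
by congr Num.sqrt; field; rewrite ?pnatr_eq0.
Qed.

Lemma bcomp1_bsqrt (w : bicomplex R) :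
  bcomp1 (bsqrt w) = Complex (Num.sqrt (complex.Re (bcomp1 w))) 0.
Proof.
rewrite /bsqrt; set a := Num.sqrt _; set b := Num.sqrt _.
rewrite /bcomp1 /badd /bmul /breal /be1 /be2 /creal /czero /=; simpc.
by apply/eqP; rewrite eq_complex /=; apply/andP; split; apply/eqP; field; rewrite ?pnatr_eq0.
Qed.

Lemma bcomp2_bsqrt (w : bicomplex R) :
  bcomp2 (bsqrt w) = Complex (Num.sqrt (complex.Re (bcomp2 w))) 0.
Proof.
rewrite /bsqrt; set a := Num.sqrt _; set b := Num.sqrt _.
rewrite /bcomp2 /badd /bmul /breal /be1 /be2 /creal /czero /=; simpc.
by apply/eqP; rewrite eq_complex /=; apply/andP; split; apply/eqP; field; rewrite ?pnatr_eq0.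
Qed.

Lemma Re_bcomp1_ge0 (u : bicomplex R) : inDplus u -> 0 <= complex.Re (bcomp1 u).
Proof. by have [_ _ _ _ cP] := bcomp1_idempotent_component; case/cP. Qed.

Lemma Re_bcomp2_ge0 (u : bicomplex R) : inDplus u -> 0 <= complex.Re (bcomp2 u).
Proof. by have [_ _ _ _ cP] := bcomp2_idempotent_component; case/cP. Qed.

Lemma bnorm_bsqrt (u : bicomplex R) : inDplus u ->
  bnorm (bsqrt u) =
  Num.sqrt ((complex.Re (bcomp1 u) + complex.Re (bcomp2 u)) / 2).
Proof.
move=> u_pos.
by rewrite bnorm_idempotent bcomp1_bsqrt bcomp2_bsqrt !cnorm2_sqrt
  ?Re_bcomp1_ge0 ?Re_bcomp2_ge0.
Qed.

Lemma bnorm_bmul_bsqrt (u v : bicomplex R) : inDplus u -> inDplus v ->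
  bnorm (bmul (bsqrt u) (bsqrt v)) =
  Num.sqrt ((complex.Re (bcomp1 u) * complex.Re (bcomp1 v) +
             complex.Re (bcomp2 u) * complex.Re (bcomp2 v)) / 2).
Proof.
move=> u_pos v_pos.
have [_ c1M _ _ _] := bcomp1_idempotent_component.
have [_ c2M _ _ _] := bcomp2_idempotent_component.
by rewrite bnorm_idempotent c1M c2M !cnorm2M !bcomp1_bsqrt !bcomp2_bsqrt
  !cnorm2_sqrt ?Re_bcomp1_ge0 ?Re_bcomp2_ge0.
Qed.

End IdempotentComponents.

Section ScalarProduct.
Variables (R : rcfType) (n : nat) (ip : bmod R n -> bmod R n -> bicomplex R).
Hypothesis ip_scalar_product : bicomplex_scalar_product ip.

Lemma ipDl U V W : ip (madd U V) W = badd (ip U W) (ip V W).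
Proof. by case: ip_scalar_product => ipD _ ipC _; rewrite ipC ipD bconj3D -!ipC. Qed.

Lemma ipZl a U W : ip (mscale a U) W = bmul (bconj3 a) (ip U W).
Proof. by case: ip_scalar_product => _ ipZ ipC _; rewrite ipC ipZ bconj3M -!ipC. Qed.

Lemma ip_expand_self X Y t : ip (madd X (mscale t Y)) (madd X (mscale t Y)) =
  badd (badd (ip X X) (bmul t (ip X Y)))
       (bmul (bconj3 t) (badd (bconj3 (ip X Y)) (bmul t (ip Y Y)))).
Proof.
case: ip_scalar_product => ipD ipZ ipC _.
by rewrite ipDl ipZl !ipD !ipZ (ipC Y X).
Qed.

Hypothesis ip_hyperbolic_positive : hyperbolic_positive ip.

Lemma idempotent_component_schwarz (c : bicomplex R -> R[i]) :
  idempotent_component c -> forall X Y,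
  cnorm2 (c (ip X Y)) <= complex.Re (c (ip X X)) * complex.Re (c (ip Y Y)).
Proof.
case=> cD cM cJ cC cP X Y.
have [[imX _] [imY Y_ge0]] := (cP _ (ip_hyperbolic_positive X),
                               cP _ (ip_hyperbolic_positive Y)).
apply: cnorm2_le_of_hermitian_ge0 => // z.
have [_] := cP _ (ip_hyperbolic_positive (madd X (mscale (z, czero R) Y))).
rewrite ip_expand_self !(cD, cM, cJ, cC).
by case: (c (ip X X)) imX => ? ? /= ->; case: (c (ip Y Y)) imY => ? ? /= ->.
Qed.

End ScalarProduct.

Theorem mainTheorem11 (R : rcfType) (n : nat)
    (ip : bmod R n -> bmod R n -> bicomplex R)
    (Hsp : bicomplex_scalar_product ip)
    (Hpos : hyperbolic_positive ip)
    (Hclosed : closed_on_V ip) :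
  forall X Y : bmod R n,
    bnorm (ip X Y) <= bnorm (bmul (bsqrt (ip X X)) (bsqrt (ip Y Y))) /\
    bnorm (bmul (bsqrt (ip X X)) (bsqrt (ip Y Y)))
      <= Num.sqrt 2 * mnorm ip X * mnorm ip Y.
Proof.
move=> X Y; have [X_pos Y_pos] := (Hpos X, Hpos Y).
rewrite /mnorm !bnorm_bsqrt // bnorm_bmul_bsqrt // bnorm_idempotent.
apply: schwarz_sum_bounds; rewrite ?Re_bcomp1_ge0 ?Re_bcomp2_ge0 //.
- exact: idempotent_component_schwarz Hsp Hpos _ (bcomp1_idempotent_component R) X Y.
- exact: idempotent_component_schwarz Hsp Hpos _ (bcomp2_idempotent_component R) X Y.
Qed.
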